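(* In the setting described in the context, let $U_0,\dots,U_d$ be one of the six decompositions below, with $U_{-1}=U_{d+1}=0$ and empty sums equal to $0$. Then for $0\le i\le d$: $[0D]$: $(K-q^{2i-d}I)U_i\subseteq U_{i+1}+\cdots+U_d$ and $(K^{-1}-q^{d-2i}I)U_i\subseteq U_{i+1}$; $[0^*D^*]$: $(K-q^{2i-d}I)U_i\subseteq U_{i-1}$ and $(K^{-1}-q^{d-2i}I)U_i\subseteq U_0+\cdots+U_{i-1}$; $[0^*D]$: $(K-q^{2i-d}I)U_i=0$ and $(K^{-1}-q^{d-2i}I)U_i=0$; $[0^*0]$: $(K-q^{2i-d}I)U_i\subseteq U_0+\cdots+U_{i-1}$ and $(K^{-1}-q^{d-2i}I)U_i\subseteq U_{i-1}$; $[D^*0]$: $KU_i\subseteq U_0+\cdots+U_{i+1}$ and $K^{-1}U_i\subseteq U_{i-1}+\cdots+U_d$; $[D^*D]$: $(K-q^{2i-d}I)U_i\subseteq U_{i+1}$ and $(K^{-1}-q^{d-2i}I)U_i\subseteq U_{i+1}+\cdots+U_d$.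
   Context: $\mathbb K$ is an algebraically closed field, $q\in\mathbb K$ nonzero and not a root of unity, $V$ a nonzero finite-dimensional $\mathbb K$-vector space. A tridiagonal pair on $V$ is an ordered pair $A,A^*$ of linear maps $V\to V$ such that: (i) each of $A,A^*$ is diagonalizable; (ii) there is an ordering $V_0,\dots,V_d$ of the eigenspaces of $A$ with $A^*V_i\subseteq V_{i-1}+V_i+V_{i+1}$ ($V_{-1}=V_{d+1}=0$); (iii) there is an ordering $V^*_0,\dots,V^*_\delta$ of the eigenspaces of $A^*$ with $AV^*_i\subseteq V^*_{i-1}+V^*_i+V^*_{i+1}$ ($V^*_{-1}=V^*_{\delta+1}=0$); (iv) no subspace $W\ne0,V$ satisfies $AW\subseteq W$, $A^*W\subseteq W$. It is known $d=\delta$; orderings as in (ii),(iii) are called standard. Setting: $A,A^*$ is a tridiagonal pair on $V$; $V_0,\dots,V_d$ (resp. $V^*_0,\dots,V^*_d$) is a standard ordering of the eigenspaces of $A$ (resp. $A^*$); the eigenvalue of $A$ on $V_i$ is $aq^{2i-d}$ and that of $A^*$ on $V^*_i$ is $a^*q^{d-2i}$ for some nonzero $a,a^*\in\mathbb K$. The six decompositions of $V$ (sequences of nonzero subspaces whose sum is direct and equals $V$) are, for $0\le i\le d$: $[0D]$: $U_i=V_i$; $[0^*D^*]$: $U_i=V^*_i$; $[0^*D]$: $U_i=(V^*_0+\cdots+V^*_i)\cap(V_i+\cdots+V_d)$; $[0^*0]$: $U_i=(V^*_0+\cdots+V^*_i)\cap(V_0+\cdots+V_{d-i})$; $[D^*0]$: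 $U_i=(V^*_{d-i}+\cdots+V^*_d)\cap(V_0+\cdots+V_{d-i})$; $[D^*D]$: $U_i=(V^*_{d-i}+\cdots+V^*_d)\cap(V_i+\cdots+V_d)$. $K:V\to V$ is the linear map acting as $q^{2i-d}I$ on the $i$th subspace of $[0^*D]$ for each $i$. *)

From HB Require Import structures.
From mathcomp Require Import all_boot all_order all_algebra.
Set Implicit Arguments. Unset Strict Implicit. Unset Printing Implicit Defensive.
Import Order.TTheory GRing.Theory Num.Theory.
Local Open Scope ring_scope.

Section TDPairs.
Variables (F : fieldType) (V : vectType F).

Definition diagonalizable (A : 'End(V)) : Prop :=
  exists s : seq F, (\sum_(t <- s) passmx.leigenspace A t)%VS = fullv.

(* Sum of U_j for lo <= j <= hi, restricted to 0 <= j <= d (so that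
   U_{-1} = U_{d+1} = 0 and empty sums are 0). *)
Definition seg (d : nat) (U : nat -> {vspace V}) (lo hi : int) : {vspace V} :=
  (\sum_(j < d.+1 | ((lo <= (j : nat)%:Z)%R && ((j : nat)%:Z <= hi)%R)) U j)%VS.

Definition eigen_ordering (A : 'End(V)) (d : nat) (Vs : nat -> {vspace V}) : Prop :=
  [/\ forall i, (i <= d)%N -> exists th, Vs i = passmx.leigenspace A th /\ Vs i != 0%VS,
      forall th, passmx.leigenspace A th != 0%VS ->
        exists2 i, (i <= d)%N & Vs i = passmx.leigenspace A th
    & forall i j, (i <= d)%N -> (j <= d)%N -> Vs i = Vs j -> i = j].

Definition standard_ordering (A B : 'End(V)) (d : nat) (Vs : nat -> {vspace V}) : Prop :=
  eigen_ordering A d Vs /\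
  forall i, (i <= d)%N ->
    (B @: Vs i <= seg d Vs (i%:Z - 1) (i%:Z + 1))%VS.

Definition TD_irreducible (A As : 'End(V)) : Prop :=
  forall W : {vspace V}, (A @: W <= W)%VS -> (As @: W <= W)%VS ->
    W = 0%VS \/ W = fullv.

Definition tridiagonal_pair (A As : 'End(V)) : Prop :=
  [/\ (0 < \dim (fullv : {vspace V}))%N,
      diagonalizable A /\ diagonalizable As,
      (exists d Vs, standard_ordering A As d Vs),
      (exists d Vs, standard_ordering As A d Vs)
    & TD_irreducible A As].

Definition dec_0D (d : nat) (Vs Vss : nat -> {vspace V}) (i : nat) := Vs i.
Definition dec_0sDs (d : nat) (Vs Vss : nat -> {vspace V}) (i : nat) := Vss i.
Definition dec_0sD (d : nat) (Vs Vss : nat -> {vspace V}) (i : nat) :=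
  (seg d Vss 0 i%:Z :&: seg d Vs i%:Z d%:Z)%VS.
Definition dec_0s0 (d : nat) (Vs Vss : nat -> {vspace V}) (i : nat) :=
  (seg d Vss 0 i%:Z :&: seg d Vs 0 (d%:Z - i%:Z))%VS.
Definition dec_Ds0 (d : nat) (Vs Vss : nat -> {vspace V}) (i : nat) :=
  (seg d Vss (d%:Z - i%:Z) d%:Z :&: seg d Vs 0 (d%:Z - i%:Z))%VS.
Definition dec_DsD (d : nat) (Vs Vss : nat -> {vspace V}) (i : nat) :=
  (seg d Vss (d%:Z - i%:Z) d%:Z :&: seg d Vs i%:Z d%:Z)%VS.

End TDPairs.

From Pilot Require Import Defs.
From HB Require Import structures.
From mathcomp Require Import all_boot all_order all_algebra.
From mathcomp Require Import zify ring.
Import Order.TTheory GRing.Theory Num.Theory.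
Local Open Scope ring_scope.

(* Write V_i, V*_i for the eigenspaces and U_i = (V*_0 + ... + V*_i) :&: (V_i + ... + V_d)
   for the [0*D] decomposition.  For every k the subspace
   sum_j (V*_0 + ... + V*_j) :&: (V_(j+k) + ... + V_d) is invariant under A and A*,
   because A - th_(j+k) and A* - th*_j shift the two flags by one step; by irreducibility
   it is 0 for k = 1 (it misses V_0) and V for k = 0 (it contains V*_0).  Hence the U_i
   decompose V with U_i + ... + U_d = V_i + ... + V_d and U_0 + ... + U_i = V*_0 + ... + V*_i,
   and A - th_i raises, A* - th*_i lowers, the index of U_i.  Testing on each U_i, where K
   is the scalar q^(2i-d), gives the q-Weyl relations
   A K^-1 - q^2 K^-1 A = a (1 - q^2) and A* K - q^2 K A* = a* (1 - q^2),
   so K^-1 - q^(d-2i) maps V_i into V_(i+1) and K - q^(2i-d) maps V*_i into V*_(i-1).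
   The other three intersection decompositions are [0*D] decompositions for reversed
   orderings, so their partial sums are again known flags, and each inclusion of the
   theorem follows by comparing flags. *)

(* [lia] preprocesses every hypothesis and is very slow in contexts full of subspace
   memberships, so we first clear everything that is not index arithmetic. *)
Ltac index_lia :=
  repeat match goal with
  | H : ?T |- _ =>
    lazymatch T with
    | is_true (leq _ _) => fail | is_true (Order.le _ _) => fail
    | is_true (Order.lt _ _) => fail | is_true (negb _) => fail
    | @eq nat _ _ => fail | @eq int _ _ => fail | nat => fail | int => fail
    | _ => clear H
    end
  end; lia.

Section Segments.
Variables (F : fieldType) (V : vectType F).
Implicit Types (d : nat) (U : nat -> {vspace V}) (X : {vspace V}) (f : 'End(V)).

Lemma lfun_shiftE f c v : (f - c *: \1)%VF v = f v - c *: v.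
Proof. by rewrite add_lfunE opp_lfunE scale_lfunE id_lfunE. Qed.

Lemma limg_subvP f X (Y : {vspace V}) :
  reflect {in X, forall v, f v \in Y} (f @: X <= Y)%VS.
Proof.
apply: (iffP subvP) => [sfXY v Xv | fXY _ /memv_imgP[v Xv ->]]; last exact: fXY.
exact/sfXY/memv_img.
Qed.

Lemma seg_subvP d U (lo hi : int) X :
  reflect (forall j, (j <= d)%N -> lo <= j%:Z -> j%:Z <= hi -> (U j <= X)%VS)
          (seg d U lo hi <= X)%VS.
Proof.
apply: (iffP subv_sumP) => [sUX j jd loj jhi | sUX j /andP[loj jhi]].
  by apply: (sUX (Ordinal (jd : (j < d.+1)%N))); exact/andP.
by apply: sUX; rewrite // -ltnS.
Qed.

Lemma subv_seg d U (lo hi : int) j :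
  (j <= d)%N -> lo <= j%:Z -> j%:Z <= hi -> (U j <= seg d U lo hi)%VS.
Proof.
by move=> jd loj jhi; apply: (sumv_sup (Ordinal (jd : (j < d.+1)%N))) => //=; rewrite loj jhi.
Qed.

Lemma memv_seg d U (lo hi : int) j v :
  (j <= d)%N -> lo <= j%:Z -> j%:Z <= hi -> v \in U j -> v \in seg d U lo hi.
Proof. by move=> jd loj jhi; apply/subvP/subv_seg. Qed.

Lemma segS d U (lo hi lo' hi' : int) :
  (forall j, (j <= d)%N -> lo <= j%:Z -> j%:Z <= hi -> lo' <= j%:Z /\ j%:Z <= hi') ->
  (seg d U lo hi <= seg d U lo' hi')%VS.
Proof.
move=> sub; apply/seg_subvP => j jd loj jhi.
by have [] := sub j jd loj jhi; apply: subv_seg.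
Qed.

Lemma seg_lt0 d U (lo hi : int) : hi < 0 -> seg d U lo hi = 0%VS.
Proof.
by move=> hi_lt0; apply/eqP; rewrite -subv0; apply/seg_subvP => j _ _ jhi; index_lia.
Qed.

Lemma seg_gtd d U (lo hi : int) : d%:Z < lo -> seg d U lo hi = 0%VS.
Proof.
by move=> d_lt_lo; apply/eqP; rewrite -subv0; apply/seg_subvP => j jd loj _; index_lia.
Qed.

Lemma eq_seg d U U' (lo hi : int) : U =1 U' -> seg d U lo hi = seg d U' lo hi.
Proof. by move=> eqU; apply: eq_bigr => j _; apply: eqU. Qed.

Lemma seg_rev d U (lo hi : int) :
  seg d (fun j => U (d - j)%N) lo hi = seg d U (d%:Z - hi) (d%:Z - lo).
Proof.
apply/eqP; rewrite eqEsubv; apply/andP; split; apply/seg_subvP => j jd loj jhi.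
  by apply: subv_seg; [exact: leq_subr | index_lia | index_lia].
rewrite -{1}(subKn jd).
by apply: (@subv_seg d (fun j => U (d - j)%N)); [exact: leq_subr | index_lia | index_lia].
Qed.

Lemma seg_memv_lfun d U (lo hi : int) X f :
  (forall j, (j <= d)%N -> lo <= j%:Z -> j%:Z <= hi -> {in U j, forall v, f v \in X}) ->
  {in seg d U lo hi, forall v, f v \in X}.
Proof.
move=> fUX v; rewrite memv_preim; apply/subvP/seg_subvP => j jd loj jhi.
by apply/subvP => w Uw; rewrite -memv_preim; apply: (fUX j).
Qed.

Lemma seg_lfun_eq d U (f g : 'End(V)) :
  seg d U 0 d = fullv -> (forall j, (j <= d)%N -> {in U j, f =1 g}) -> f = g.
Proof.
move=> Ufull fg; have fg0 : {in seg d U 0 d, forall v, (f - g)%VF v \in 0%VS}.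
  apply: seg_memv_lfun => j jd _ _ w Uw.
  by rewrite add_lfunE opp_lfunE (fg j jd w Uw) subrr mem0v.
apply/lfunP => v; apply/eqP; rewrite -subr_eq0 -memv0 -opp_lfunE -add_lfunE.
by rewrite fg0 // Ufull memvf.
Qed.

Section Diagonal.
Variables (d : nat) (U : nat -> {vspace V}) (f : 'End(V)) (s : nat -> F).
Hypothesis fU : forall j v, v \in U j -> f v = s j *: v.

Lemma seg_diag_lo (i : nat) (hi : int) v :
  v \in seg d U i%:Z hi -> f v - s i *: v \in seg d U (i%:Z + 1) hi.
Proof.
rewrite -lfun_shiftE; apply: seg_memv_lfun => j jd ij jhi w Uw.
rewrite lfun_shiftE (fU _ _ Uw) -scalerBl.
have [->|ji] := eqVneq j i; first by rewrite subrr scale0r mem0v.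
by apply: memvZ; apply: memv_seg Uw => //; index_lia.
Qed.

Lemma seg_diag_hi (lo : int) (i : nat) v :
  v \in seg d U lo i%:Z -> f v - s i *: v \in seg d U lo (i%:Z - 1).
Proof.
rewrite -lfun_shiftE; apply: seg_memv_lfun => j jd loj ji' w Uw.
rewrite lfun_shiftE (fU _ _ Uw) -scalerBl.
have [->|ji] := eqVneq j i; first by rewrite subrr scale0r mem0v.
by apply: memvZ; apply: memv_seg Uw => //; index_lia.
Qed.

End Diagonal.

Definition tridiagonal_on d f U :=
  forall j, (j <= d)%N -> (f @: U j <= seg d U (j%:Z - 1) (j%:Z + 1))%VS.

Lemma tridiagonal_on_rev d f U :
  tridiagonal_on d f U -> tridiagonal_on d f (fun j => U (d - j)%N).
Proof.
move=> fU j jd; rewrite seg_rev; apply: subv_trans (fU _ (leq_subr j d)) _.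
by apply: segS => k; index_lia.
Qed.

Lemma seg_tridiag d U f (lo hi : int) c v :
  tridiagonal_on d f U -> v \in seg d U lo hi -> f v - c *: v \in seg d U (lo - 1) (hi + 1).
Proof.
move=> fU; rewrite -lfun_shiftE; apply: seg_memv_lfun => j jd loj jhi w Uw.
rewrite lfun_shiftE; apply: memvB.
  have fUw := subvP (fU j jd) _ (memv_img f Uw).
  by apply: subvP _ _ fUw; apply: segS => k; index_lia.
by apply: memvZ; apply: memv_seg Uw => //; index_lia.
Qed.

Lemma capv0_addv_eq (X B C : {vspace V}) :
  (X <= B + C)%VS -> (C <= X)%VS -> (X :&: B = 0)%VS -> X = C.
Proof.
move=> sXBC sCX XB0; apply/eqP; rewrite eqEsubv sCX andbT; apply/subvP => v Xv.
have /memv_addP[b Bb [c Cc vE]] := subvP sXBC v Xv.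
have : b \in (X :&: B)%VS by rewrite memv_cap Bb -[b](addrK c) -vE memvB // (subvP sCX).
by rewrite XB0 memv0 vE => /eqP->; rewrite add0r.
Qed.

Lemma seg_split d U (lo m hi : int) :
  (seg d U lo hi <= seg d U lo (m - 1) + seg d U m hi)%VS.
Proof.
apply/seg_subvP => j jd loj jhi; have [jm | mj] := ltP j%:Z m.
  by apply: subv_trans (addvSl _ _); apply: subv_seg => //; index_lia.
by apply: subv_trans (addvSr _ _); apply: subv_seg.
Qed.

End Segments.

Arguments limg_subvP {F V f X Y}.
Arguments seg_subvP {F V d U lo hi X}.
Arguments subv_seg {F V d U lo hi} j.
Arguments memv_seg {F V d U lo hi} j {v}.
Arguments segS {F V d U lo hi lo' hi'}.
Arguments seg_lt0 {F V d U lo hi}.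
Arguments seg_gtd {F V d U lo hi}.
Arguments eq_seg {F V d U U' lo hi}.
Arguments seg_memv_lfun {F V d U lo hi X f}.
Arguments seg_lfun_eq {F V d U f g}.
Arguments seg_diag_lo {F V d U f s} fU {i hi v}.
Arguments seg_diag_hi {F V d U f s} fU {lo i v}.
Arguments seg_rev {F V d} U {lo hi}.
Arguments tridiagonal_on {F V}.
Arguments tridiagonal_on_rev {F V d f U}.
Arguments seg_tridiag {F V d U f lo hi} c {v}.
Arguments capv0_addv_eq {F V X} B {C}.
Arguments seg_split {F V d U lo} m {hi}.

Section SplitDecomposition.
Variables (F : fieldType) (V : vectType F) (A As : 'End(V)) (d : nat).
Variables (th ths : nat -> F) (Vs Vss : nat -> {vspace V}).
Hypothesis eigA : forall j v, v \in Vs j -> A v = th j *: v.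
Hypothesis eigAs : forall j v, v \in Vss j -> As v = ths j *: v.
Hypothesis stdA : tridiagonal_on d A Vss.
Hypothesis stdAs : tridiagonal_on d As Vs.

Local Notation Vge m := (seg d Vs m d).
Local Notation Vsle m := (seg d Vss 0 m).
Local Notation U := (dec_0sD d Vs Vss).

Lemma Vsle_A (m : int) c v : v \in Vsle m -> A v - c *: v \in Vsle (m + 1).
Proof.
move=> /(seg_tridiag c stdA); apply: subvP; apply: segS => j; index_lia.
Qed.

Lemma Vge_As (m : int) c v : v \in Vge m -> As v - c *: v \in Vge (m - 1).
Proof.
move=> /(seg_tridiag c stdAs); apply: subvP; apply: segS => j; index_lia.
Qed.

Lemma split_dec_A j v : v \in U j -> A v - th j *: v \in U j.+1.
Proof.
move=> /memv_capP[vle vge]; rewrite memv_cap.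
have -> : j.+1%:Z = j%:Z + 1 by index_lia.
by rewrite Vsle_A // (seg_diag_lo eigA vge).
Qed.

Lemma split_dec_As j v : v \in U j.+1 -> As v - ths j.+1 *: v \in U j.
Proof.
move=> /memv_capP[vle vge]; rewrite memv_cap.
have -> : j%:Z = j.+1%:Z - 1 by index_lia.
by rewrite Vge_As // (seg_diag_hi eigAs vle).
Qed.

Lemma split_dec0_As v : v \in U 0 -> As v = ths 0 *: v.
Proof.
move=> /memv_capP[/(seg_diag_hi eigAs) + _]; rewrite seg_lt0 // memv0 subr_eq0.
by move/eqP.
Qed.

Let band (k : nat) (m : int) := (Vsle m :&: Vge (m + k%:Z))%VS.
Let bands k := seg d (band k) 0 d.

Lemma band_sub_bands k m : (band k m <= bands k)%VS.
Proof.
case: m => [n|n]; last by rewrite /band seg_lt0 ?cap0v ?sub0v.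
have [nd | dn] := leqP n d; first exact: subv_seg.
by rewrite /band [seg d Vs _ _]seg_gtd ?capv0 ?sub0v //; index_lia.
Qed.

Lemma bands_A k : (A @: bands k <= bands k)%VS.
Proof.
apply/limg_subvP/seg_memv_lfun => j jd _ _ v /memv_capP[vle vge].
rewrite -[A v](subrK (th (j + k) *: v)); apply: memvD; last first.
  by apply/memvZ/(subvP (band_sub_bands k j)); rewrite memv_cap vle.
apply/(subvP (band_sub_bands k (j%:Z + 1))); rewrite memv_cap Vsle_A //=.
rewrite -PoszD in vge; have := seg_diag_lo eigA vge.
by apply: subvP; apply: segS => i; index_lia.
Qed.

Lemma bands_As k : (As @: bands k <= bands k)%VS.
Proof.
apply/limg_subvP/seg_memv_lfun => j jd _ _ v /memv_capP[vle vge].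
rewrite -[As v](subrK (ths j *: v)); apply: memvD; last first.
  by apply/memvZ/(subvP (band_sub_bands k j)); rewrite memv_cap vle.
apply/(subvP (band_sub_bands k (j%:Z - 1))); rewrite memv_cap seg_diag_hi //=.
by have := Vge_As _ (ths j) _ vge; apply: subvP; apply: segS => i; index_lia.
Qed.

Hypothesis irr : TD_irreducible A As.
Hypothesis Vfull : seg d Vs 0 d = fullv.
Hypothesis V0_neq0 : Vs 0 != 0%VS.
Hypothesis Vss0_neq0 : Vss 0 != 0%VS.
Hypothesis V0_cap : (Vs 0 :&: Vge 1 = 0)%VS.

Lemma band1_eq0 m : band 1 m = 0%VS.
Proof.
have [bands1 | bands1_full] := irr _ (bands_A 1) (bands_As 1).
  by apply/eqP; rewrite -subv0 -bands1 band_sub_bands.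
case/negP: V0_neq0; rewrite -subv0 -V0_cap subv_cap subvv /=.
apply: subv_trans (subvf _) _; rewrite -bands1_full.
apply/seg_subvP => j jd _ _; apply: subv_trans (capvSr _ _) _.
by apply: segS => i; index_lia.
Qed.

Lemma split_dec_full : seg d U 0 d = fullv.
Proof.
have [bands0 | bands0_full] := irr _ (bands_A 0) (bands_As 0).
  case/negP: Vss0_neq0; rewrite -subv0 -bands0.
  apply: subv_trans (band_sub_bands 0 0); rewrite subv_cap Vfull subvf andbT.
  exact: subv_seg.
by rewrite -bands0_full; apply: eq_seg => j; rewrite /band addr0.
Qed.

Lemma split_dec_geq (m : int) : seg d U m d = Vge m.
Proof.
apply/esym/(capv0_addv_eq (seg d U 0 (m - 1))).
- by apply: subv_trans (seg_split m); rewrite split_dec_full subvf.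
- apply/seg_subvP => j jd mj _; apply: subv_trans (capvSr _ _) _.
  by apply: segS => i; index_lia.
apply/eqP; rewrite -subv0 -(band1_eq0 (m - 1)) /band subrK capvC capvS //.
apply/seg_subvP => j jd _ jm; apply: subv_trans (capvSl _ _) _.
by apply: segS => i; index_lia.
Qed.

Lemma split_dec_leq (m : int) : seg d U 0 m = Vsle m.
Proof.
apply/esym/(capv0_addv_eq (seg d U (m + 1) d)).
- have := @seg_split _ _ d U 0 (m + 1) d.
  by rewrite addrK addvC split_dec_full; apply: subv_trans (subvf _).
- apply/seg_subvP => j jd _ jm; apply: subv_trans (capvSl _ _) _.
  by apply: segS => i; index_lia.
apply/eqP; rewrite -subv0 -(band1_eq0 m) /band capvS //.
apply/seg_subvP => j jd mj _; apply: subv_trans (capvSr _ _) _.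
by apply: segS => i; index_lia.
Qed.

End SplitDecomposition.

Arguments split_dec_A {F V A d th Vs Vss} eigA stdA {j v}.
Arguments split_dec_As {F V As d ths Vs Vss} eigAs stdAs {j v}.
Arguments split_dec0_As {F V As d ths Vs Vss} eigAs {v}.
Arguments split_dec_geq {F V A As d th ths Vs Vss}.
Arguments split_dec_leq {F V A As d th ths Vs Vss}.

Section Reversal.
Variables (F : fieldType) (V : vectType F) (d : nat) (Vs Vss : nat -> {vspace V}).
Local Notation rev U := (fun j : nat => U (d - j)%N).

Lemma dec_0s0_rev : dec_0s0 d Vs Vss =1 dec_0sD d (rev Vs) Vss.
Proof. by move=> j; rewrite /dec_0sD seg_rev subrr. Qed.

Lemma dec_Ds0_rev : dec_Ds0 d Vs Vss =1 dec_0sD d (rev Vs) (rev Vss).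
Proof. by move=> j; rewrite /dec_0sD !seg_rev subrr subr0. Qed.

Lemma dec_DsD_rev : dec_DsD d Vs Vss =1 dec_0sD d Vs (rev Vss).
Proof. by move=> j; rewrite /dec_0sD seg_rev subr0. Qed.

End Reversal.

Arguments dec_0s0_rev {F V d Vs Vss}.
Arguments dec_Ds0_rev {F V d Vs Vss}.
Arguments dec_DsD_rev {F V d Vs Vss}.

Section Eigenspaces.
Variables (F : fieldType) (V : vectType F) (f : 'End(V)).
Local Notation E := (passmx.leigenspace f).

Lemma memv_leigenspace c v : (v \in E c) = (f v == c *: v).
Proof. by rewrite memv_ker lfun_shiftE subr_eq0. Qed.

Lemma leigenspace_stable (g : 'End(V)) c :
  (forall v, f (g v) = g (f v)) -> (g @: E c <= E c)%VS.
Proof.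
move=> fg; apply/limg_subvP => v; rewrite !memv_leigenspace fg => /eqP->.
by rewrite linearZ.
Qed.

Lemma leigenspace_cap_sum_eq0 (I : eqType) (r : seq I) (P : pred I) (t : I -> F) c :
  (forall j, P j -> t j != c) -> (E c :&: \sum_(j <- r | P j) E (t j) = 0)%VS.
Proof.
move=> tc; elim: r => [|h r IH]; first by rewrite big_nil capv0.
rewrite big_cons; case: ifP => Ph //.
set S := (\sum_(j <- r | P j) E (t j))%VS.
apply/eqP; rewrite -subv0; apply/subvP => v /memv_capP[Ev /memv_addP[x Ex [y Sy vE]]].
move: (Ev) Ex; rewrite !memv_leigenspace => /eqP fv /eqP fx.
pose g := (f - t h *: \1)%VF.
have gS : (g @: S <= S)%VS.
  rewrite limg_sum; apply: (big_ind2 (fun U W => U <= W)%VS) => [||j _].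
  - exact: sub0v.
  - by move=> U1 S1 U2 S2; apply: addvS.
  by apply: leigenspace_stable => w; rewrite !lfun_shiftE linearB linearZ.
have gv : g v = (c - t h) *: v by rewrite lfun_shiftE fv scalerBl.
have gx : g x = 0 by rewrite lfun_shiftE fx subrr.
have : (c - t h) *: v \in (E c :&: S)%VS.
  by rewrite memv_cap memvZ // -gv vE linearD /= gx add0r (subvP gS) // memv_img.
by rewrite IH !memv0 scaler_eq0 subr_eq0 eq_sym (negbTE (tc h Ph)).
Qed.

Lemma eigen_ordering_neq0 d Vs j :
  eigen_ordering f d Vs -> (j <= d)%N -> Vs j != 0%VS.
Proof. by case=> Vs_neq0 _ _ /Vs_neq0[c []]. Qed.

Lemma eigen_ordering_full d Vs :
  Defs.diagonalizable f -> eigen_ordering f d Vs -> seg d Vs 0 d = fullv.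
Proof.
move=> [s sE] [_ onto _]; apply/eqP; rewrite eqEsubv subvf -sE /=.
elim/big_rec: _ => [|c W _ sW]; first exact: sub0v.
rewrite subv_add sW andbT; have [-> | nz] := eqVneq (E c) 0%VS; first exact: sub0v.
by have [j jd <-] := onto c nz; apply: subv_seg => //; index_lia.
Qed.

Lemma eigen_ordering_leigenspace_eq0 d (t : nat -> F) c :
  eigen_ordering f d (fun j => E (t j)) -> (forall j, (j <= d)%N -> t j != c) ->
  E c = 0%VS.
Proof.
move=> [_ onto _] tc; apply/eqP; apply: contraT => nz.
have [j jd Ej] := onto c nz.
have vEc := memv_pick (E c); have vEt : vpick (E c) \in E (t j) by rewrite Ej.
move: vEc vEt; rewrite !memv_leigenspace => /eqP-> /eqP/eqP.
rewrite -subr_eq0 -scalerBl scaler_eq0 subr_eq0 eq_sym (negbTE (tc j jd)) vpick0.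
by rewrite (negbTE nz).
Qed.

End Eigenspaces.

Arguments memv_leigenspace {F V f}.
Arguments leigenspace_cap_sum_eq0 {F V f I r P t c}.
Arguments eigen_ordering_neq0 {F V f d Vs j}.
Arguments eigen_ordering_full {F V f d Vs}.
Arguments eigen_ordering_leigenspace_eq0 {F V f d t c}.

Lemma limg_full_lker0 (F : fieldType) (V : vectType F) (f : 'End(V)) :
  limg f = fullv -> lker f == 0%VS.
Proof.
move=> f_onto; have := limg_ker_dim f fullv; rewrite capfv f_onto => /eqP.
by rewrite -{2}[\dim fullv]add0n eqn_add2r dimv_eq0.
Qed.

Section NotRootOfUnity.
Variables (F : fieldType) (q : F).
Hypothesis q_neq0 : q != 0.

Lemma mul_expfz (m n p : int) : m + n = p -> q ^ m * q ^ n = q ^ p.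
Proof. by move=> <-; rewrite expfzDr. Qed.

Hypothesis q_not_root : forall n : nat, (0 < n)%N -> q ^+ n != 1.

Lemma expfz_inj : injective (fun m : int => q ^ m).
Proof.
move=> m n /= qmn; apply/eqP; rewrite -subr_eq0.
have : q ^ (m - n) = 1 by rewrite expfzDr // qmn -expfzDr // subrr.
case: (m - n) => [[|k]|k] // /eqP; first by rewrite (negbTE (q_not_root k.+1 isT)).
by rewrite NegzE -exprnN invr_eq1 (negbTE (q_not_root k.+1 isT)).
Qed.

End NotRootOfUnity.

Arguments mul_expfz {F q}.
Arguments expfz_inj {F q}.

Section QCommutation.
Variables (F : fieldType) (V : vectType F) (X Y : 'End(V)) (qq : F).

Lemma qcomm_component (t y y' : F) (u r : V) :
  X u = t *: u + r -> Y u = y *: u -> Y r = y' *: r -> y = qq * y' ->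
  X (Y u) - qq *: Y (X u) = (y * t * (1 - qq)) *: u.
Proof.
move=> Xu Yu Yr yE.
have XYu : X (Y u) = (y * t) *: u + y *: r by rewrite Yu linearZ /= Xu scalerDr scalerA.
have YXu : Y (X u) = (t * y) *: u + y' *: r by rewrite Xu linearD linearZ /= Yu Yr scalerA.
rewrite XYu YXu scalerDr !scalerA -yE opprD addrACA subrr addr0 -scalerBl.
by congr (_ *: _); ring.
Qed.

Lemma qcomm_eigen_shift (c t y : F) v :
  (X \o Y - qq *: (Y \o X) = c *: \1)%VF -> y * t * (1 - qq) = c -> X v = t *: v ->
  X (Y v - y *: v) = (qq * t) *: (Y v - y *: v).
Proof.
move=> /lfunP/(_ v); rewrite add_lfunE opp_lfunE !scale_lfunE !comp_lfunE id_lfunE.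
move=> XY cE Xv; have YXv : Y (X v) = t *: Y v by rewrite Xv linearZ.
have XYv : X (Y v) = (qq * t) *: Y v + c *: v.
  by rewrite -XY YXv scalerA addrC subrK.
rewrite linearB linearZ /= XYv Xv scalerA -cE scalerBr scalerA -addrA.
by congr (_ + _); rewrite -scalerBl -scaleNr; congr (_ *: _); ring.
Qed.

End QCommutation.

Arguments qcomm_component {F V X Y qq t y y' u r}.
Arguments qcomm_eigen_shift {F V X Y qq c t y v}.

Section KOnDecompositions.
Variables (F : fieldType) (V : vectType F) (q : F) (A As K : 'End(V)) (d : nat) (a as_ : F).
Hypothesis q_neq0 : q != 0.
Hypothesis q_not_root : forall n : nat, (0 < n)%N -> q ^+ n != 1.
Hypotheses (a_neq0 : a != 0) (as_neq0 : as_ != 0).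
Hypothesis hTD : tridiagonal_pair A As.

Local Notation th j := (a * q ^ (2 * (j : nat)%:Z - d%:Z)).
Local Notation ths j := (as_ * q ^ (d%:Z - 2 * (j : nat)%:Z)).
Local Notation Vs := (fun j : nat => passmx.leigenspace A (th j)).
Local Notation Vss := (fun j : nat => passmx.leigenspace As (ths j)).
Local Notation rev U := (fun j : nat => U (d - j)%N).
Local Notation U := (dec_0sD d Vs Vss).
Local Notation qK j := (q ^ (2 * (j : nat)%:Z - d%:Z)).
Local Notation qKinv j := (q ^ (d%:Z - 2 * (j : nat)%:Z)).

Hypothesis hstdA : standard_ordering A As d Vs.
Hypothesis hstdAs : standard_ordering As A d Vss.
Hypothesis hK : forall i, (i <= d)%N -> forall v, v \in U i -> K v = qK i *: v.

Let irr : TD_irreducible A As. Proof. by case: hTD. Qed.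
Let stdA : tridiagonal_on d A Vss := hstdAs.2.
Let stdAs : tridiagonal_on d As Vs := hstdA.2.
Let eigA j v : v \in Vs j -> A v = th j *: v.
Proof. by rewrite memv_leigenspace => /eqP. Qed.
Let eigAs j v : v \in Vss j -> As v = ths j *: v.
Proof. by rewrite memv_leigenspace => /eqP. Qed.
Let Vs_neq0 j : (j <= d)%N -> Vs j != 0%VS := eigen_ordering_neq0 hstdA.1.
Let Vss_neq0 j : (j <= d)%N -> Vss j != 0%VS := eigen_ordering_neq0 hstdAs.1.
Let Vfull : seg d Vs 0 d = fullv.
Proof. by case: hTD => _ [diagA _] _ _ _; apply: eigen_ordering_full diagA hstdA.1. Qed.

Let th_inj (m n : int) : a * q ^ m = a * q ^ n -> m = n.
Proof. by move/(mulfI a_neq0)/(expfz_inj q_neq0 q_not_root). Qed.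
Let ths_inj (m n : int) : as_ * q ^ m = as_ * q ^ n -> m = n.
Proof. by move/(mulfI as_neq0)/(expfz_inj q_neq0 q_not_root). Qed.

Let Vs0_cap : (Vs 0%N :&: seg d Vs 1 d = 0)%VS.
Proof.
apply: leigenspace_cap_sum_eq0 => j /andP[j_ge1 _].
by apply/eqP => /th_inj; index_lia.
Qed.

Let Vsd_cap : (Vs d :&: seg d Vs 0 (d%:Z - 1) = 0)%VS.
Proof.
apply: leigenspace_cap_sum_eq0 => j /andP[_ j_le].
by apply/eqP => /th_inj; index_lia.
Qed.

Let Vs_overflow : Vs d.+1 = 0%VS.
Proof.
apply: (eigen_ordering_leigenspace_eq0 hstdA.1) => j jd.
by apply/eqP => /th_inj; index_lia.
Qed.

Let Vss_underflow : passmx.leigenspace As (as_ * q ^ (d%:Z + 2)) = 0%VS.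
Proof.
apply: (eigen_ordering_leigenspace_eq0 hstdAs.1) => j jd.
by apply/eqP => /ths_inj; index_lia.
Qed.

Let Vs0_neq0 := Vs_neq0 0 (leq0n d).
Let Vss0_neq0 := Vss_neq0 0 (leq0n d).
Let U_geq := split_dec_geq eigA eigAs stdA stdAs irr Vfull Vs0_neq0 Vss0_neq0 Vs0_cap.
Let U_leq := split_dec_leq eigA eigAs stdA stdAs irr Vfull Vs0_neq0 Vss0_neq0 Vs0_cap.
Let U_full : seg d U 0 d = fullv. Proof. by rewrite U_geq. Qed.

Let eigA_rev j : forall v, v \in rev Vs j -> A v = th (d - j)%N *: v := eigA (d - j).
Let eigAs_rev j : forall v, v \in rev Vss j -> As v = ths (d - j)%N *: v := eigAs (d - j).
Let Vfull_rev : seg d (rev Vs) 0 d = fullv.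
Proof. by rewrite seg_rev subrr subr0. Qed.
Let Vs0_neq0_rev : rev Vs 0%N != 0%VS.
Proof. by rewrite /= subn0 Vs_neq0. Qed.
Let Vss0_neq0_rev : rev Vss 0%N != 0%VS.
Proof. by rewrite /= subn0 Vss_neq0. Qed.
Let Vs0_cap_rev : (rev Vs 0%N :&: seg d (rev Vs) 1 d = 0)%VS.
Proof. by rewrite seg_rev subrr /= subn0. Qed.

Let dec_0s0_leq m : seg d (dec_0s0 d Vs Vss) 0 m = seg d Vss 0 m.
Proof.
rewrite (eq_seg dec_0s0_rev).
exact: split_dec_leq eigA_rev eigAs stdA (tridiagonal_on_rev stdAs) irr
  Vfull_rev Vs0_neq0_rev Vss0_neq0 Vs0_cap_rev m.
Qed.

Let dec_Ds0_geq m : seg d (dec_Ds0 d Vs Vss) m d = seg d Vs 0 (d%:Z - m).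
Proof.
rewrite (eq_seg dec_Ds0_rev) (split_dec_geq eigA_rev eigAs_rev
  (tridiagonal_on_rev stdA) (tridiagonal_on_rev stdAs) irr
  Vfull_rev Vs0_neq0_rev Vss0_neq0_rev Vs0_cap_rev m).
by rewrite (seg_rev Vs) subrr.
Qed.

Let dec_Ds0_leq m : seg d (dec_Ds0 d Vs Vss) 0 m = seg d Vss (d%:Z - m) d.
Proof.
rewrite (eq_seg dec_Ds0_rev) (split_dec_leq eigA_rev eigAs_rev
  (tridiagonal_on_rev stdA) (tridiagonal_on_rev stdAs) irr
  Vfull_rev Vs0_neq0_rev Vss0_neq0_rev Vs0_cap_rev m).
by rewrite (seg_rev Vss) subr0.
Qed.

Let dec_DsD_geq m : seg d (dec_DsD d Vs Vss) m d = seg d Vs m d.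
Proof.
rewrite (eq_seg dec_DsD_rev).
exact: split_dec_geq eigA eigAs_rev (tridiagonal_on_rev stdA) stdAs irr
  Vfull Vs0_neq0 Vss0_neq0_rev Vs0_cap m.
Qed.

Lemma qKinv_qK j : qKinv j * qK j = 1.
Proof. by rewrite (mul_expfz q_neq0 _ _ 0) //; index_lia. Qed.

Lemma K_dec_0sD {j v} : v \in U j -> K v = qK j *: v.
Proof.
move=> Uv; have [jd | dj] := leqP j d; first exact: hK.
have Vge0 : seg d Vs j d = 0%VS by apply: seg_gtd; index_lia.
by move: Uv; rewrite /dec_0sD Vge0 capv0 memv0 => /eqP->; rewrite linear0 scaler0.
Qed.

Lemma K_lker0 : lker K == 0%VS.
Proof.
apply/limg_full_lker0/eqP; rewrite eqEsubv subvf -{1}U_full.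
apply/seg_subvP => j _ _ _; apply/subvP => u Uu.
have -> : u = K (qKinv j *: u) by rewrite linearZ /= (K_dec_0sD Uu) scalerA qKinv_qK scale1r.
exact: memv_img (memvf _).
Qed.

Lemma Kinv_dec_0sD {j v} : v \in U j -> (K^-1)%VF v = qKinv j *: v.
Proof.
move=> Uv; rewrite -[v in LHS](scale1r) -(qKinv_qK j) -scalerA -(K_dec_0sD Uv) -linearZ.
by rewrite (lker0_lfunK K_lker0).
Qed.

Lemma A_Kinv_qcomm :
  (A \o K^-1 - q ^+ 2 *: (K^-1 \o A) = (a * (1 - q ^+ 2)) *: \1)%VF.
Proof.
apply: (seg_lfun_eq U_full) => j _ v Uv.
rewrite add_lfunE opp_lfunE !scale_lfunE !comp_lfunE id_lfunE.
have Av : A v = th j *: v + (A v - th j *: v) by rewrite addrC subrK.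
rewrite (qcomm_component Av (Kinv_dec_0sD Uv) (Kinv_dec_0sD (split_dec_A eigA stdA Uv))).
  by rewrite mulrCA qKinv_qK mulr1.
by rewrite -[q ^+ 2]/(q ^ 2%:Z) (mul_expfz q_neq0 _ _ (d%:Z - 2 * j%:Z)) //; index_lia.
Qed.

Lemma As_K_qcomm :
  (As \o K - q ^+ 2 *: (K \o As) = (as_ * (1 - q ^+ 2)) *: \1)%VF.
Proof.
apply: (seg_lfun_eq U_full) => j _ v Uv.
rewrite add_lfunE opp_lfunE !scale_lfunE !comp_lfunE id_lfunE.
have Asv : As v = ths j *: v + (As v - ths j *: v) by rewrite addrC subrK.
(* q^(2j-d-2) is the eigenvalue of K on U_(j-1); for j = 0 the vector is 0 anyway. *)
have K_As_shift : K (As v - ths j *: v) = q ^ (2 * j%:Z - d%:Z - 2) *: (As v - ths j *: v).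
  case: j Uv {Asv} => [|j] Uv; first by rewrite (split_dec0_As eigAs Uv) subrr !linear0.
  by rewrite (K_dec_0sD (split_dec_As eigAs stdAs Uv)); congr (q ^ _ *: _); index_lia.
rewrite (qcomm_component Asv (K_dec_0sD Uv) K_As_shift).
  by rewrite mulrCA (mulrC (qK j)) qKinv_qK mulr1.
by rewrite -[q ^+ 2]/(q ^ 2%:Z) (mul_expfz q_neq0 _ _ (2 * j%:Z - d%:Z)) //; index_lia.
Qed.

Lemma Kinv_Vs_shift i v : v \in Vs i -> (K^-1)%VF v - qKinv i *: v \in Vs i.+1.
Proof.
move=> Vv; rewrite memv_leigenspace (qcomm_eigen_shift A_Kinv_qcomm _ (eigA _ _ Vv)).
  rewrite -[q ^+ 2]/(q ^ 2%:Z) mulrCA (mul_expfz q_neq0 _ _ (2 * i.+1%:Z - d%:Z)) //.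
  index_lia.
by rewrite mulrCA qKinv_qK mulr1.
Qed.

Lemma K_Vss_shift i v : v \in Vss i.+1 -> K v - qK i.+1 *: v \in Vss i.
Proof.
move=> Vv; rewrite memv_leigenspace (qcomm_eigen_shift As_K_qcomm _ (eigAs _ _ Vv)).
  rewrite -[q ^+ 2]/(q ^ 2%:Z) mulrCA (mul_expfz q_neq0 _ _ (d%:Z - 2 * i%:Z)) //.
  index_lia.
by rewrite mulrCA (mulrC (qK _)) qKinv_qK mulr1.
Qed.

Lemma K_Vss0 v : v \in Vss 0%N -> K v = qK 0 *: v.
Proof.
move=> Vv; apply/eqP; rewrite -subr_eq0 -memv0 -Vss_underflow memv_leigenspace.
rewrite (qcomm_eigen_shift As_K_qcomm _ (eigAs _ _ Vv)).
  rewrite -[q ^+ 2]/(q ^ 2%:Z) mulrCA (mul_expfz q_neq0 _ _ (d%:Z + 2)) //.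
  index_lia.
by rewrite mulrCA (mulrC (qK _)) qKinv_qK mulr1.
Qed.

Local Notation Kp i := (K - qK i *: \1)%VF.
Local Notation Km i := ((K^-1)%VF - qKinv i *: \1)%VF.

Lemma dec_0D_Kp i : (i <= d)%N ->
  (Kp i @: dec_0D d Vs Vss i <= seg d (dec_0D d Vs Vss) (i%:Z + 1) d%:Z)%VS.
Proof.
move=> id; apply/limg_subvP => v Vv; rewrite lfun_shiftE /dec_0D -U_geq.
by apply: (seg_diag_lo (@K_dec_0sD)); rewrite U_geq (memv_seg i).
Qed.

Lemma dec_0D_Km i : (i <= d)%N ->
  (Km i @: dec_0D d Vs Vss i <= seg d (dec_0D d Vs Vss) (i%:Z + 1) (i%:Z + 1))%VS.
Proof.
move=> id; apply/limg_subvP => v /Kinv_Vs_shift; rewrite lfun_shiftE.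
have [id' | di] := ltnP i d; first by apply: (memv_seg i.+1) => //; index_lia.
have -> : i = d by index_lia.
by rewrite Vs_overflow memv0 => /eqP->; apply: mem0v.
Qed.

Lemma dec_0sDs_Kp i : (i <= d)%N ->
  (Kp i @: dec_0sDs d Vs Vss i <= seg d (dec_0sDs d Vs Vss) (i%:Z - 1) (i%:Z - 1))%VS.
Proof.
move=> id; apply/limg_subvP => v; rewrite lfun_shiftE /dec_0sDs.
case: i id => [|i] id Vv; first by rewrite K_Vss0 // subrr mem0v.
by apply: (memv_seg i); [index_lia | index_lia | index_lia | exact: K_Vss_shift].
Qed.

Lemma dec_0sDs_Km i : (i <= d)%N ->
  (Km i @: dec_0sDs d Vs Vss i <= seg d (dec_0sDs d Vs Vss) 0 (i%:Z - 1))%VS.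
Proof.
move=> id; apply/limg_subvP => v Vv; rewrite lfun_shiftE /dec_0sDs -U_leq.
by apply: (seg_diag_hi (@Kinv_dec_0sD)); rewrite U_leq (memv_seg i).
Qed.

Lemma dec_0sD_Kp i : (Kp i @: U i)%VS = 0%VS.
Proof.
apply/eqP; rewrite -subv0; apply/limg_subvP => v Uv.
by rewrite lfun_shiftE (K_dec_0sD Uv) subrr mem0v.
Qed.

Lemma dec_0sD_Km i : (Km i @: U i)%VS = 0%VS.
Proof.
apply/eqP; rewrite -subv0; apply/limg_subvP => v Uv.
by rewrite lfun_shiftE (Kinv_dec_0sD Uv) subrr mem0v.
Qed.

Lemma Kinv_seg_Vs {m : int} {v} : v \in seg d Vs 0 m -> (K^-1)%VF v \in seg d Vs 0 (m + 1).
Proof.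
apply: seg_memv_lfun => j jd _ jm u Vu.
rewrite -[_ u](subrK (qKinv j *: u)) memvD //; last by apply/memvZ/(memv_seg j) => //; index_lia.
have := subvP (dec_0D_Km j jd) _ (memv_img _ Vu); rewrite lfun_shiftE.
by apply: subvP; apply: segS => k; index_lia.
Qed.

Lemma K_seg_Vss {m : int} {v} : v \in seg d Vss m d -> K v \in seg d Vss (m - 1) d.
Proof.
apply: seg_memv_lfun => j jd mj _ u Vu.
rewrite -[K u](subrK (qK j *: u)) memvD //; last by apply/memvZ/(memv_seg j) => //; index_lia.
have := subvP (dec_0sDs_Kp j jd) _ (memv_img _ Vu); rewrite lfun_shiftE.
by apply: subvP; apply: segS => k; index_lia.
Qed.

Local Notation X := (dec_0s0 d Vs Vss).
Local Notation Y := (dec_Ds0 d Vs Vss).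
Local Notation W := (dec_DsD d Vs Vss).

Lemma dec_0s0_Kp i : (i <= d)%N -> (Kp i @: X i <= seg d X 0 (i%:Z - 1))%VS.
Proof.
move=> id; apply/limg_subvP => v /memv_capP[vle _].
by rewrite lfun_shiftE dec_0s0_leq -U_leq; apply: (seg_diag_hi (@K_dec_0sD)); rewrite U_leq.
Qed.

Lemma dec_0s0_Km i : (i <= d)%N -> (Km i @: X i <= seg d X (i%:Z - 1) (i%:Z - 1))%VS.
Proof.
move=> id; apply/limg_subvP => v /memv_capP[vle vge]; rewrite lfun_shiftE.
have w_le : (K^-1)%VF v - qKinv i *: v \in seg d Vss 0 (i%:Z - 1).
  by rewrite -U_leq; apply: (seg_diag_hi (@Kinv_dec_0sD)); rewrite U_leq.
have w_ge : (K^-1)%VF v - qKinv i *: v \in seg d Vs 0 (d%:Z - i%:Z + 1).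
  rewrite memvB ?Kinv_seg_Vs // memvZ //.
  by move: vge; apply: subvP; apply: segS => k; index_lia.
case: i id w_le w_ge {vle vge} => [|i] id w_le w_ge.
  by move: w_le; rewrite seg_lt0 // memv0 => /eqP->; apply: mem0v.
apply: (memv_seg i); [index_lia | index_lia | index_lia |]; rewrite memv_cap.
by apply/andP; split; [move: w_le | move: w_ge]; apply: subvP; apply: segS => k; index_lia.
Qed.

Lemma dec_Ds0_K i : (i <= d)%N -> (K @: Y i <= seg d Y 0 (i%:Z + 1))%VS.
Proof.
move=> id; apply/limg_subvP => v /memv_capP[vge _]; rewrite dec_Ds0_leq.
by move: (K_seg_Vss vge); apply: subvP; apply: segS => k; index_lia.
Qed.

Lemma dec_Ds0_Kinv i : (i <= d)%N -> ((K^-1)%VF @: Y i <= seg d Y (i%:Z - 1) d%:Z)%VS.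
Proof.
move=> id; apply/limg_subvP => v /memv_capP[_ vle]; rewrite dec_Ds0_geq.
by move: (Kinv_seg_Vs vle); apply: subvP; apply: segS => k; index_lia.
Qed.

Lemma dec_DsD_Kp i : (i <= d)%N -> (Kp i @: W i <= seg d W (i%:Z + 1) (i%:Z + 1))%VS.
Proof.
move=> id; apply/limg_subvP => v /memv_capP[vss vs]; rewrite lfun_shiftE.
have w_ss : K v - qK i *: v \in seg d Vss (d%:Z - i%:Z - 1) d.
  rewrite memvB ?K_seg_Vss // memvZ //.
  by move: vss; apply: subvP; apply: segS => k; index_lia.
have w_s : K v - qK i *: v \in seg d Vs (i%:Z + 1) d.
  by rewrite -U_geq; apply: (seg_diag_lo (@K_dec_0sD)); rewrite U_geq.
have [id' | di] := ltnP i d; last first.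
  by move: w_s; rewrite seg_gtd ?memv0 => [/eqP->|]; [apply: mem0v | index_lia].
apply: (memv_seg i.+1); [index_lia | index_lia | index_lia |]; rewrite memv_cap.
by apply/andP; split; [move: w_ss | move: w_s]; apply: subvP; apply: segS => k; index_lia.
Qed.

Lemma dec_DsD_Km i : (i <= d)%N -> (Km i @: W i <= seg d W (i%:Z + 1) d%:Z)%VS.
Proof.
move=> id; apply/limg_subvP => v /memv_capP[_ vge].
rewrite lfun_shiftE dec_DsD_geq -U_geq.
by apply: (seg_diag_lo (@Kinv_dec_0sD)); rewrite U_geq.
Qed.

End KOnDecompositions.

Theorem theorem11p1 (F : closedFieldType) (V : vectType F)
    (q : F) (hq0 : q != 0) (hq : forall n : nat, (0 < n)%N -> q ^+ n != 1)
    (A As : 'End(V)) (hTD : tridiagonal_pair A As)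
    (d : nat) (a as_ : F) (ha : a != 0) (has : as_ != 0)
    (hstdA : standard_ordering A As d
               (fun i => passmx.leigenspace A (a * q ^ (2 * i%:Z - d%:Z))))
    (hstdAs : standard_ordering As A d
               (fun i => passmx.leigenspace As (as_ * q ^ (d%:Z - 2 * i%:Z))))
    (K : 'End(V))
    (hK : forall i : nat, (i <= d)%N -> forall v, 
        v \in dec_0sD d (fun i => passmx.leigenspace A (a * q ^ (2 * i%:Z - d%:Z)))
                        (fun i => passmx.leigenspace As (as_ * q ^ (d%:Z - 2 * i%:Z))) i ->
        K v = q ^ (2 * i%:Z - d%:Z) *: v) :
  let Vs := fun i : nat => passmx.leigenspace A (a * q ^ (2 * i%:Z - d%:Z)) in
  let Vss := fun i : nat => passmx.leigenspace As (as_ * q ^ (d%:Z - 2 * i%:Z)) in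
  let Kp := fun i : nat => (K - q ^ (2 * i%:Z - d%:Z) *: \1)%VF in
  let Km := fun i : nat => ((K^-1)%VF - q ^ (d%:Z - 2 * i%:Z) *: \1)%VF in
  forall i : nat, (i <= d)%N ->
  [/\
   (* [0D] *)
   (let U := dec_0D d Vs Vss in
     (Kp i @: U i <= seg d U (i%:Z + 1) d%:Z)%VS /\
     (Km i @: U i <= seg d U (i%:Z + 1) (i%:Z + 1))%VS),
   (* [0*D*] *)
   (let U := dec_0sDs d Vs Vss in
     (Kp i @: U i <= seg d U (i%:Z - 1) (i%:Z - 1))%VS /\
     (Km i @: U i <= seg d U 0 (i%:Z - 1))%VS)
   &
   (* [0*D] *)
   (let U := dec_0sD d Vs Vss in
     (Kp i @: U i)%VS = 0%VS /\ (Km i @: U i)%VS = 0%VS)] /\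
  [/\
   (* [0*0] *)
   (let U := dec_0s0 d Vs Vss in
     (Kp i @: U i <= seg d U 0 (i%:Z - 1))%VS /\
     (Km i @: U i <= seg d U (i%:Z - 1) (i%:Z - 1))%VS),
   (* [D*0] *)
   (let U := dec_Ds0 d Vs Vss in
     (K @: U i <= seg d U 0 (i%:Z + 1))%VS /\
     ((K^-1)%VF @: U i <= seg d U (i%:Z - 1) d%:Z)%VS)
   &
   (* [D*D] *)
   (let U := dec_DsD d Vs Vss in
     (Kp i @: U i <= seg d U (i%:Z + 1) (i%:Z + 1))%VS /\
     (Km i @: U i <= seg d U (i%:Z + 1) d%:Z)%VS)].
Proof.
move=> Vs Vss Kp Km i id; split; split; split.
- exact: dec_0D_Kp.
- exact: dec_0D_Km.
- exact: dec_0sDs_Kp.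
- exact: dec_0sDs_Km.
- exact: dec_0sD_Kp.
- exact: dec_0sD_Km.
- exact: dec_0s0_Kp.
- exact: dec_0s0_Km.
- exact: dec_Ds0_K.
- exact: dec_Ds0_Kinv.
- exact: dec_DsD_Kp.
- exact: dec_DsD_Km.
Qed.
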